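(* Let $m_j(x,y)=x^{k_j}y^{l_j}$, $j=1,\dots,q$, be monomials with nonnegative integer exponents, and let $f(x,y)=c_1m_1(x,y)+\cdots+c_qm_q(x,y)$ with real coefficients satisfying $|c_j|\le1$ for $j=1,\dots,q$. Let $\delta>0$ and for $i=1,\dots,N$ let $$S_i=\{(x,y)\mid x=x_i>0,\ 0<y_i-\delta\le y\le y_i+\delta\}$$ be vertical segments, and suppose that for every $i$ the curve $f=0$ passes through $S_i$ (i.e. $f$ vanishes at some point of $S_i$). Then $$\sum_{i=1}^N f(x_i,y_i)^2\le \delta^2\,q\sum_{i=1}^N h(x_i,y_i+\delta),\qquad\text{where } h(x,y)=\sum_{j=1}^q\Big(\frac{\partial m_j(x,y)}{\partial y}\Big)^2.$$ *)

From HB Require Import structures.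
From mathcomp Require Import all_boot all_order all_algebra.
Set Implicit Arguments. Unset Strict Implicit. Unset Printing Implicit Defensive.
Import Order.TTheory GRing.Theory Num.Theory.
Local Open Scope ring_scope.

Definition monom {R : realFieldType} (k l : nat) (x y : R) : R := x ^+ k * y ^+ l.

(* Partial derivative in y of the monomial x^k y^l, evaluated at (x,y):
   the formal derivative of the polynomial (x^k) 'X^l in the variable y. *)
Definition dmonom_dy {R : realFieldType} (k l : nat) (x y : R) : R :=
  (((x ^+ k)%:P * 'X^l)^`()).[y].

Definition fpoly {R : realFieldType} (q : nat) (c : 'I_q -> R) (k l : 'I_q -> nat)
  (x y : R) : R := \sum_(j < q) c j * monom (k j) (l j) x y.

Definition hfun {R : realFieldType} (q : nat) (k l : 'I_q -> nat) (x y : R) : R :=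
  \sum_(j < q) (dmonom_dy (k j) (l j) x y) ^+ 2.

From HB Require Import structures.
From mathcomp Require Import all_boot all_order all_algebra.
From mathcomp Require Import lra.
Set Implicit Arguments. Unset Strict Implicit. Unset Printing Implicit Defensive.
Import Order.TTheory GRing.Theory Num.Theory.
Local Open Scope ring_scope.

(* Fix i and a zero t of f(x_i, .) with |y_i - t| <= delta, so that
   |f(x_i, y_i)| = |f(x_i, y_i) - f(x_i, t)|.  On [0, M] with M = y_i + delta
   the mean value estimate |s^l - t^l| <= |s - t| l M^(l-1), together with
   |c_j| <= 1, bounds this by delta * sum_j dm_j/dy (x_i, y_i + delta), since
   dm_j/dy is nondecreasing in y.  Squaring and applying Cauchy-Schwarz to
   the q-term sum gives the i-th summand of the inequality. *)

Section Estimates.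

Variable R : realFieldType.
Implicit Types (x y s t M : R) (k l : nat).

Lemma dmonom_dyE k l x y : dmonom_dy k l x y = x ^+ k * (y ^+ l.-1 *+ l).
Proof.
by rewrite /dmonom_dy mul_polyC derivZ derivXn hornerZ hornerMn hornerXn.
Qed.

Lemma dmonom_dy_ge0 k l x y : 0 <= x -> 0 <= y -> 0 <= dmonom_dy k l x y.
Proof.
by move=> x0 y0; rewrite dmonom_dyE mulr_ge0 ?mulrn_wge0 ?exprn_ge0.
Qed.

Lemma ler_distXn s t M n : 0 <= s <= M -> 0 <= t <= M ->
  `|s ^+ n - t ^+ n| <= `|s - t| * (M ^+ n.-1 *+ n).
Proof.
move=> /andP[s0 sM] /andP[t0 tM].
rewrite subrXX normrM ler_wpM2l // -[n in _ *+ n]card_ord -sumr_const.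
apply: (le_trans (ler_norm_sum _ _ _)); apply: ler_sum => i _.
have le_iN : (i <= n.-1)%N by rewrite -ltnS prednK ?(leq_ltn_trans _ (ltn_ord i)).
rewrite normrM !ger0_norm ?exprn_ge0 // -[X in _ <= M ^+ X](subnK le_iN) exprD.
by rewrite ler_pM ?exprn_ge0 ?lerXn2r // nnegrE (le_trans s0 sM).
Qed.

Lemma ler_dist_monom k l x s t M : 0 <= x -> 0 <= s <= M -> 0 <= t <= M ->
  `|monom k l x s - monom k l x t| <= `|s - t| * dmonom_dy k l x M.
Proof.
move=> x0 sM tM; rewrite /monom -mulrBr normrM ger0_norm ?exprn_ge0 //.
by rewrite dmonom_dyE mulrCA ler_wpM2l ?exprn_ge0 ?ler_distXn.
Qed.

Lemma sqr_sum_le_card q (a : 'I_q -> R) :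
  (\sum_(j < q) a j) ^+ 2 <= q%:R * \sum_(j < q) a j ^+ 2.
Proof.
set S := \sum_(j < q) a j ^+ 2.
suff le2 : (\sum_(j < q) a j) ^+ 2 *+ 2 <= (q%:R * S) *+ 2 by rewrite lerMn2r in le2.
have -> : (\sum_(j < q) a j) ^+ 2 *+ 2 = \sum_(j < q) \sum_(i < q) a j * a i *+ 2.
  rewrite expr2 mulr_suml -sumrMnl; apply: eq_bigr => j _.
  by rewrite mulr_sumr sumrMnl.
have -> : (q%:R * S) *+ 2 = \sum_(j < q) \sum_(i < q) (a j ^+ 2 + a i ^+ 2).
  under eq_bigr => j _ do rewrite big_split /= sumr_const card_ord.
  by rewrite big_split /= sumr_const card_ord sumrMnl mulr_natl mulr2n.
by apply: ler_sum => j _; apply: ler_sum => i _; rewrite leif_mean_square_scaled.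
Qed.

Variables (q : nat) (k l : 'I_q -> nat) (c : 'I_q -> R).
Hypothesis c_le1 : forall j, `|c j| <= 1.

Lemma ler_dist_fpoly x s t M : 0 <= x -> 0 <= s <= M -> 0 <= t <= M ->
  `|fpoly c k l x s - fpoly c k l x t|
    <= `|s - t| * \sum_(j < q) dmonom_dy (k j) (l j) x M.
Proof.
move=> x0 sM tM; rewrite /fpoly -sumrB mulr_sumr.
apply: (le_trans (ler_norm_sum _ _ _)); apply: ler_sum => j _.
rewrite -mulrBr normrM -[X in _ <= X]mul1r.
by rewrite ler_pM ?normr_ge0 ?ler_dist_monom.
Qed.

Lemma sqr_fpoly_le_near_root x y t delta :
  0 <= x -> 0 <= y - delta -> y - delta <= t <= y + delta ->
  fpoly c k l x t = 0 ->
  fpoly c k l x y ^+ 2 <= delta ^+ 2 * q%:R * hfun k l x (y + delta).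
Proof.
move=> x0 y0 /andP[lo_t hi_t] ft0.
set D := \sum_(j < q) dmonom_dy (k j) (l j) x (y + delta).
have D0 : 0 <= D by apply: sumr_ge0 => j _; rewrite dmonom_dy_ge0 //; lra.
have fy_le : `|fpoly c k l x y| <= delta * D.
  have y_in : 0 <= y <= y + delta by apply/andP; split; lra.
  have t_in : 0 <= t <= y + delta by apply/andP; split; lra.
  have yt_le : `|y - t| <= delta by rewrite ler_norml; apply/andP; split; lra.
  have -> : fpoly c k l x y = fpoly c k l x y - fpoly c k l x t by rewrite ft0 subr0.
  exact: le_trans (ler_dist_fpoly x0 y_in t_in) (ler_wpM2r D0 yt_le).
have bound0 : 0 <= delta * D by rewrite mulr_ge0 //; lra.
rewrite -real_normK ?num_real //.
apply: le_trans (lerXn2r 2 (normr_ge0 _) bound0 fy_le) _.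
by rewrite exprMn -mulrA ler_wpM2l ?sqr_ge0 ?sqr_sum_le_card.
Qed.

End Estimates.

Theorem theorem2 (R : realFieldType) (q : nat) (k l : 'I_q -> nat) (c : 'I_q -> R)
  (hc : forall j, `|c j| <= 1) (delta : R) (hdelta : 0 < delta)
  (N : nat) (x y : 'I_N -> R)
  (hx : forall i, 0 < x i) (hy : forall i, 0 < y i - delta)
  (hS : forall i, exists t : R,
          y i - delta <= t /\ t <= y i + delta /\ fpoly c k l (x i) t = 0) :
  \sum_(i < N) (fpoly c k l (x i) (y i)) ^+ 2
    <= delta ^+ 2 * q%:R * \sum_(i < N) hfun k l (x i) (y i + delta).
Proof.
rewrite mulr_sumr; apply: ler_sum => i _.
have [t [lo_t [hi_t ft0]]] := hS i.
apply: (sqr_fpoly_le_near_root hc (ltW (hx i)) (ltW (hy i)) _ ft0).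
by rewrite lo_t hi_t.
Qed.
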